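(* Let $n\ge1$ and $\mathbb{P}\in\mathcal{P}_n$. Let \[ \mathcal{T}=\big\{T\in\mathbb{R}_{++}^{2\times n}:\ \mathbf{P}_{\mathbf{z}\sim\mathbb{P}}[z_j=T_{1j}/T_{2j}]=0\ \text{for all } j\in[n]\big\}. \] Then $R_n(\mathbb{P})=\sup_{T\in\mathcal{T}}R_n(\mathbb{P},T)$.
   Context: Scheduling on two machines with $n$ tasks. A processing-time matrix is $T=(T_{ij})\in\mathbb{R}_{++}^{2\times n}$. An allocation is $X\in\{0,1\}^{2\times n}$ with $X_{1j}+X_{2j}=1$; makespan $M(X,T)=\max_{i\in\{1,2\}}\sum_j X_{ij}T_{ij}$; $M^*(T)=\min_X M(X,T)$. $\mathcal{P}_n$ is the set of Borel probability measures on $\mathbb{R}^n$ supported in $\mathbb{R}_{++}^n$. For $\mathbb{P}\in\mathcal{P}_n$, algorithm $\mathcal{A}^{\mathbb{P}}$ draws $\mathbf{z}\sim\mathbb{P}$ and sends task $j$ to machine 1 iff $T_{1j}/T_{2j}<z_j$ (else to machine 2). $M(\mathbb{P},T)$ is the expected makespan of this allocation, $R_n(\mathbb{P},T)=M(\mathbb{P},T)/M^*(T)$, and $R_n(\mathbb{P})=\sup_{T\in\mathbb{R}_{++}^{2\times n}}R_n(\mathbb{P},T)\in[1,\infty]$. *)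

From HB Require Import structures.
From mathcomp Require Import all_boot all_order all_algebra.
From mathcomp Require Import all_classical all_reals all_analysis.
Set Implicit Arguments. Unset Strict Implicit. Unset Printing Implicit Defensive.
Import Order.TTheory GRing.Theory Num.Theory.
Local Open Scope classical_set_scope.
Local Open Scope ring_scope.

(* Machines are indexed by 'I_2 : machine 1 = ord0, machine 2 = (1 : 'I_2).
   An allocation X in {0,1}^{2 x n} with X_1j + X_2j = 1 is represented
   by the function sending each task j to the machine it is assigned to. *)
Definition allocation (n : nat) := {ffun 'I_n -> 'I_2}.

Definition pos_matrix (R : realType) (n : nat) (T : 'M[R]_(2, n)) : Prop :=
  forall i j, 0 < T i j.

Definition load (R : realType) (n : nat) (X : allocation n) (T : 'M[R]_(2, n))
  (i : 'I_2) : R := \sum_(j < n | X j == i) T i j.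

Definition makespan (R : realType) (n : nat) (X : allocation n)
  (T : 'M[R]_(2, n)) : R :=
  Num.max (load X T ord0) (load X T (1 : 'I_2)).

Definition opt_makespan (R : realType) (n : nat) (T : 'M[R]_(2, n)) : R :=
  \big[Num.min/makespan [ffun _ => ord0] T]_(X : allocation n) makespan X T.

Definition alg_alloc (R : realType) (n : nat) (z : n.-tuple R)
  (T : 'M[R]_(2, n)) : allocation n :=
  [ffun j => if T ord0 j / T 1 j < tnth z j then ord0 else (1 : 'I_2)].

(* P is a probability measure on R^n (Borel = product sigma-algebra on
   n.-tuple R) supported in R_{++}^n *)
Definition supported_pos (R : realType) (n : nat)
  (P : probability (n.-tuple R) R) : Prop :=
  P [set z | forall j, 0 < tnth z j] = 1%E.

Definition exp_makespan (R : realType) (n : nat)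
  (P : probability (n.-tuple R) R) (T : 'M[R]_(2, n)) : \bar R :=
  (\int[P]_z (makespan (alg_alloc z T) T)%:E)%E.

Definition sched_ratio (R : realType) (n : nat)
  (P : probability (n.-tuple R) R) (T : 'M[R]_(2, n)) : \bar R :=
  (exp_makespan P T * ((opt_makespan T)^-1)%:E)%E.

Definition ratio_sup (R : realType) (n : nat)
  (P : probability (n.-tuple R) R) : \bar R :=
  ereal_sup [set sched_ratio P T | T in [set T | pos_matrix T]].

Definition no_atom_at_ratio (R : realType) (n : nat)
  (P : probability (n.-tuple R) R) (T : 'M[R]_(2, n)) : Prop :=
  forall j : 'I_n, P [set z | tnth z j = T ord0 j / T 1 j] = 0%E.

(* Stretching the first row of T by a factor s > 1 moves every ratio
   T_1j / T_2j to s T_1j / T_2j.  Each coordinate of z has at most countably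
   many atoms, so s can be taken arbitrarily close to 1 with no atom at any of
   the new ratios.  The allocation of the algorithm changes only when some z_j
   falls in the window ]T_1j / T_2j, s T_1j / T_2j], an event whose
   probability vanishes as s -> 1 by continuity from above; off that event the
   stretched makespan is at least the original one, while the optimum grows by
   at most the factor s.  Hence the ratio at the stretched matrix is at least
   the ratio at T up to an arbitrarily small error. *)

From HB Require Import structures.
From mathcomp Require Import all_boot all_order all_algebra.
From mathcomp Require Import all_classical all_reals all_analysis.
From mathcomp Require Import lra.
Import Order.TTheory GRing.Theory Num.Theory.
Local Open Scope classical_set_scope.
Local Open Scope ring_scope.
Set Implicit Arguments. Unset Strict Implicit.

Lemma exists_nonatom_between d (Omega : measurableType d) (R : realType)
    (P : probability Omega R) (I : finType) (X : I -> Omega -> R) (a b : R) :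
    (forall i, measurable_fun setT (X i)) -> a < b ->
  exists2 s, a < s < b & forall i, P (X i @^-1` [set s]) = 0%E.
Proof.
move=> mX ab.
pose atoms i := [set r | 0 < pmf (mfun_Sub (mem_set (mX i)) : {RV P >-> R}) r].
have atoms_countable : countable (\bigcup_(i in [set: I]) atoms i).
  apply: bigcup_countable => [|i _]; last exact: pmf_gt0_countable.
  exact/finite_set_countable/finite_finset.
have [s abs s_nonatom] : exists2 s, a < s < b & ~ (\bigcup_(i in [set: I]) atoms i) s.
  apply: contrapT => all_atoms.
  have : lebesgue_measure [set` `]a, b[] = 0%E.
    apply: countable_lebesgue_measure0; apply: sub_countable atoms_countable.
    apply: subset_card_le => s /=; rewrite in_itv /= => abs.
    by apply: contrapT => ns; apply: all_atoms; exists s.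
  rewrite lebesgue_measure_itv /= lte_fin ab -EFinD => -[/eqP].
  by rewrite subr_eq0 gt_eqF.
exists s => // i; apply/eqP; rewrite eq_le measure_ge0 andbT.
have mXs : measurable (X i @^-1` [set s]).
  by rewrite -[A in measurable A]setTI; apply: (mX i).
rewrite -(fineK (fin_num_measure P _ mXs)).
by rewrite lee_fin leNgt; apply/negP => pos; apply: s_nonatom; exists i.
Qed.

Lemma perturbed_ratio_ge (R : realFieldType) (a a' o o' s p M e : R) :
  0 < o -> 0 < o' -> 0 <= a <= M -> 0 <= a' -> 1 <= s -> o' <= s * o ->
  a <= a' + M * p -> (s - 1 + p) * M <= e * o -> 0 <= e ->
  a / o - e <= a' / o'.
Proof.
move=> o_gt0 o'_gt0 /andP[a_ge0 a_le] a'_ge0 s_ge1 o'_le a_le' small e_ge0.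
have so_gt0 : 0 < s * o by rewrite mulr_gt0 // (lt_le_trans ltr01).
apply: le_trans (_ : a' / (s * o) <= _); last first.
  by rewrite ler_wpM2l // lef_pV2.
rewrite ler_pdivlMr // mulrBl (mulrC s) mulrA divfK ?gt_eqF //.
have : (s - 1) * a <= (s - 1) * M by rewrite ler_wpM2l // subr_ge0.
have : e * o <= e * (s * o) by rewrite ler_wpM2l // ler_peMl // ltW.
nra.
Qed.

Section makespan.
Variables (R : realType) (n : nat).
Implicit Types (X : allocation n) (T : 'M[R]_(2, n)).

Definition total_time T := \sum_(i < 2) \sum_(j < n) T i j.

Lemma total_time_ge0 T : pos_matrix T -> 0 <= total_time T.
Proof. by move=> T_pos; do 2![apply: sumr_ge0 => ? _]; apply: ltW. Qed.

Lemma load_ge0 X T i : pos_matrix T -> 0 <= load X T i.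
Proof. by move=> T_pos; apply: sumr_ge0 => j _; apply: ltW. Qed.

Lemma load_le_makespan X T i : load X T i <= makespan X T.
Proof.
rewrite /makespan le_max; case: i => -[|[|//]] i_lt2.
  by rewrite (_ : Ordinal i_lt2 = ord0) ?lexx //; apply: val_inj.
by rewrite (_ : Ordinal i_lt2 = 1) ?lexx ?orbT //; apply: val_inj.
Qed.

Lemma makespan_ge0 X T : pos_matrix T -> 0 <= makespan X T.
Proof. by move=> T_pos; apply: le_trans (load_le_makespan X T ord0); exact: load_ge0. Qed.

Lemma makespan_gt0 X T : (0 < n)%N -> pos_matrix T -> 0 < makespan X T.
Proof.
move=> n_gt0 T_pos; pose j0 := Ordinal n_gt0.
apply: lt_le_trans (load_le_makespan X T (X j0)).
rewrite /load (bigD1 j0) //=; apply: ltr_pwDl; first exact: T_pos.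
by apply: sumr_ge0 => j _; apply: ltW.
Qed.

Lemma makespan_le_total X T : pos_matrix T -> makespan X T <= total_time T.
Proof.
move=> T_pos; have load_le i : load X T i <= total_time T.
  rewrite /total_time (bigD1 i) //= -[leLHS]addr0 lerD //.
    rewrite /load [leRHS](bigID (fun j => X j == i)) /= lerDl.
    by apply: sumr_ge0 => j _; apply: ltW.
  by do 2![apply: sumr_ge0 => ? _]; apply: ltW.
by rewrite /makespan ge_max !load_le.
Qed.

Lemma opt_makespan_gt0 T : (0 < n)%N -> pos_matrix T -> 0 < opt_makespan T.
Proof.
move=> n_gt0 T_pos; apply: (big_ind (fun x => 0 < x)); first exact: makespan_gt0.
  by move=> x y x_gt0 y_gt0; rewrite lt_min x_gt0 y_gt0.
by move=> X _; exact: makespan_gt0.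
Qed.

Definition stretch_row0 (s : R) T : 'M[R]_(2, n) :=
  \matrix_(i, j) (if i == ord0 then s * T i j else T i j).

Definition switch_window (s : R) T : set (n.-tuple R) :=
  [set z | exists j, T ord0 j / T 1 j < tnth z j <= s * (T ord0 j / T 1 j)].

Lemma stretch_row0_ratio s T j :
  stretch_row0 s T ord0 j / stretch_row0 s T 1 j = s * (T ord0 j / T 1 j).
Proof. by rewrite !mxE mulrA. Qed.

Lemma load_stretch_row0 s X T i :
  load X (stretch_row0 s T) i = (if i == ord0 then s else 1) * load X T i.
Proof.
rewrite /load mulr_sumr; apply: eq_bigr => j _; rewrite mxE.
by case: (i == ord0); rewrite ?mul1r.
Qed.

Section stretch.
Variables (s : R) (T : 'M[R]_(2, n)).
Hypotheses (s_ge1 : 1 <= s) (T_pos : pos_matrix T).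

Lemma stretch_row0_pos : pos_matrix (stretch_row0 s T).
Proof.
move=> i j; rewrite mxE; case: ifP => _; last exact: T_pos.
by rewrite mulr_gt0 // (lt_le_trans ltr01).
Qed.

Lemma makespan_le_stretch_row0 X : makespan X T <= makespan X (stretch_row0 s T).
Proof.
rewrite /makespan !load_stretch_row0 /= mul1r ge_max !le_max lexx !orbT andbT.
by rewrite ler_peMl ?load_ge0.
Qed.

Lemma makespan_stretch_row0_le X : makespan X (stretch_row0 s T) <= s * makespan X T.
Proof.
rewrite /makespan !load_stretch_row0 /= mul1r ge_max.
rewrite ler_wpM2l ?(le_trans ler01) ?le_max ?lexx //=.
by rewrite (le_trans _ (ler_peMl (makespan_ge0 X T_pos) s_ge1)) // le_max lexx orbT.
Qed.

Lemma opt_makespan_stretch_row0_le :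
  opt_makespan (stretch_row0 s T) <= s * opt_makespan T.
Proof.
apply: (big_ind2 (fun a b => a <= s * b)); first exact: makespan_stretch_row0_le.
  move=> a1 b1 a2 b2 ab1 ab2; rewrite ge_min.
  by case: (leP b1 b2) => _; rewrite ?ab1 ?ab2 ?orbT.
by move=> X _; exact: makespan_stretch_row0_le.
Qed.

Lemma alg_alloc_stretch_row0 z :
  ~ switch_window s T z -> alg_alloc z (stretch_row0 s T) = alg_alloc z T.
Proof.
move=> z_out; apply/ffunP => j; rewrite !ffunE stretch_row0_ratio.
have c_gt0 : 0 < T ord0 j / T 1 j by apply: divr_gt0.
case: (ltP (T ord0 j / T 1 j) (tnth z j)) => [c_lt|z_le]; last first.
  by rewrite ltNge (le_trans z_le) // ler_peMl // ltW.
by case: ltP => // z_le; case: z_out; exists j; rewrite c_lt z_le.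
Qed.

End stretch.

Lemma switch_window_mono T s s' :
  pos_matrix T -> s <= s' -> switch_window s T `<=` switch_window s' T.
Proof.
move=> T_pos ss' z [j /andP[c_lt z_le]]; exists j; rewrite c_lt (le_trans z_le) //.
by rewrite ler_wpM2r // ltW // divr_gt0.
Qed.

Lemma bigcap_switch_window T :
  pos_matrix T -> \bigcap_m switch_window (1 + m.+1%:R^-1) T = set0.
Proof.
move=> T_pos; apply/seteqP; split => // z z_in.
have eventually_out j : \forall m \near \oo,
    ~ (T ord0 j / T 1 j < tnth z j <= (1 + m.+1%:R^-1) * (T ord0 j / T 1 j)).
  have c_gt0 : 0 < T ord0 j / T 1 j by apply: divr_gt0.
  have [c_lt|_] := ltP (T ord0 j / T 1 j) (tnth z j); last by near=> m.
  have gap : 0 < (tnth z j - T ord0 j / T 1 j) / (T ord0 j / T 1 j).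
    by rewrite divr_gt0 // subr_gt0.
  near=> m; apply/negP; rewrite -ltNge mulrDl mul1r -ltrBrDl -ltr_pdivlMr //.
  near: m; exact: (near_infty_natSinv_lt (PosNum gap)).
have [N _ out] := filter_forall _ eventually_out.
by have [j] := z_in N I; apply: (out N (leqnn N) j).
Unshelve. all: by end_near.
Qed.

End makespan.

Section expected_makespan.
Variables (R : realType) (n : nat) (P : probability (n.-tuple R) R).
Implicit Types (T : 'M[R]_(2, n)).

Lemma measurable_fun_alg_alloc T (h : allocation n -> R) :
  measurable_fun [set: n.-tuple R] (fun z : n.-tuple R => h (alg_alloc z T)).
Proof.
move=> _ Y mY; rewrite setTI.
have -> : (fun z => h (alg_alloc z T)) @^-1` Y =
    \bigcup_(X in [set X | Y (h X)]) \bigcap_(j in [set: 'I_n])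
      [set z | (if T ord0 j / T 1 j < tnth z j then ord0 else 1) = X j].
  apply/seteqP; split => z /=.
    by move=> Yz; exists (alg_alloc z T) => // j _ /=; rewrite ffunE.
  move=> [X /= YX zX]; rewrite (_ : alg_alloc z T = X) //.
  by apply/ffunP => j; rewrite ffunE zX.
apply: fin_bigcup_measurable => [|X _]; first exact: finite_finset.
apply: fin_bigcap_measurable => [|j _]; first exact: finite_finset.
have m_lt : measurable_fun setT (fun z : n.-tuple R => T ord0 j / T 1 j < tnth z j).
  exact: measurable_realfun.measurable_fun_ltr (measurable_cst _) (measurable_tnth j).
rewrite -[A in measurable A]setTI.
exact: (m_lt measurableT [set b | (if b then ord0 else 1) = X j]).
Qed.

Lemma measurable_switch_window s T : measurable (switch_window s T).
Proof.
rewrite (_ : switch_window s T = \bigcup_(j in [set: 'I_n])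
    (fun z : n.-tuple R => tnth z j) @^-1`
      [set` `](T ord0 j / T 1 j), s * (T ord0 j / T 1 j)]]).
  apply: fin_bigcup_measurable => [|j _]; first exact: finite_finset.
  by rewrite -[A in measurable A]setTI; apply: measurable_tnth.
by apply/seteqP; split => z [j]; exists j; rewrite //= in_itv.
Qed.

Lemma measurable_makespan_alg_alloc T :
  measurable_fun [set: n.-tuple R] (fun z : n.-tuple R => makespan (alg_alloc z T) T).
Proof. exact: (measurable_fun_alg_alloc T (fun X => makespan X T)). Qed.

Section positive_matrix.
Variable T : 'M[R]_(2, n).
Hypothesis T_pos : pos_matrix T.

Lemma exp_makespan_ge0 : (0 <= exp_makespan P T)%E.
Proof. by apply: integral_ge0 => z _; rewrite lee_fin makespan_ge0. Qed.

Lemma exp_makespan_le_total : (exp_makespan P T <= (total_time T)%:E)%E.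
Proof.
apply: le_trans (_ : \int[P]_z (total_time T)%:E <= _)%E.
  apply: ge0_le_integral => //.
  - by move=> z _; rewrite lee_fin makespan_ge0.
  - by apply/measurable_realfun.measurable_EFinP; exact: measurable_makespan_alg_alloc.
  - by move=> z _; rewrite lee_fin makespan_le_total.
rewrite integral_cst // -[leRHS]mule1.
by rewrite lee_wpmul2l ?probability_le1 ?lee_fin ?total_time_ge0.
Qed.

Lemma exp_makespan_fin_num : exp_makespan P T \is a fin_num.
Proof.
by rewrite ge0_fin_numE ?exp_makespan_ge0 // (le_lt_trans exp_makespan_le_total) ?ltry.
Qed.

Lemma sched_ratioE :
  sched_ratio P T = (fine (exp_makespan P T) / opt_makespan T)%:E.
Proof. by rewrite /sched_ratio -{1}(fineK exp_makespan_fin_num). Qed.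

Lemma exp_makespan_le_stretch_row0 s : 1 <= s ->
  (exp_makespan P T <=
   exp_makespan P (stretch_row0 s T) + (total_time T)%:E * P (switch_window s T))%E.
Proof.
move=> s_ge1; set Ts := stretch_row0 s T; set W := switch_window s T.
have mW : measurable W := measurable_switch_window s T.
have mf := measurable_makespan_alg_alloc.
have mI : measurable_fun [set: n.-tuple R]
    (fun z : n.-tuple R => total_time T * \1_W z).
  exact/measurable_realfun.measurable_funM/measurable_realfun.measurable_indic.
have total_ge0 := total_time_ge0 T_pos.
have Ts_pos : pos_matrix Ts := stretch_row0_pos s_ge1 T_pos.
apply: (@le_trans _ _
  (\int[P]_z (makespan (alg_alloc z Ts) Ts + total_time T * \1_W z)%:E)%E).
  apply: ge0_le_integral => //.
  - by move=> z _; rewrite lee_fin makespan_ge0.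
  - exact/measurable_realfun.measurable_EFinP.
  - exact/measurable_realfun.measurable_EFinP/measurable_realfun.measurable_funD.
  move=> z _; rewrite lee_fin.
  have [z_in|z_out] := pselect (W z).
    rewrite indicE mem_set // mulr1 (le_trans (makespan_le_total _ T_pos)) //.
    by rewrite lerDr makespan_ge0.
  rewrite indicE memNset // mulr0 addr0 /Ts alg_alloc_stretch_row0 //.
  exact: makespan_le_stretch_row0.
under eq_integral do rewrite EFinD.
rewrite ge0_integralD //; first last.
- exact/measurable_realfun.measurable_EFinP.
- by move=> z _; rewrite lee_fin mulr_ge0.
- exact/measurable_realfun.measurable_EFinP.
- by move=> z _; rewrite lee_fin makespan_ge0.
rewrite leeD2l //; under eq_integral do rewrite EFinM.
rewrite ge0_integralZl_EFin //.
- by rewrite integral_indic ?setIT.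
- exact/measurable_realfun.measurable_EFinP/measurable_realfun.measurable_indic.
Qed.

Lemma measure_switch_window_small eta : 0 < eta ->
  exists2 s0, 1 < s0 & forall s, s <= s0 -> (P (switch_window s T) <= eta%:E)%E.
Proof.
move=> eta_gt0; have mW s : measurable (switch_window s T) := measurable_switch_window _ _.
pose W m := switch_window (1 + m.+1%:R^-1) T.
have W_noninc : {homo W : m m' / (m <= m')%N >-> (m' <= m)%O}.
  move=> m m' mm'; rewrite subsetEset; apply: switch_window_mono => //.
  by rewrite lerD2l lef_pV2 ?posrE // ler_nat ltnS.
have : (P \o W) m @[m --> \oo] --> P (\bigcap_m W m).
  apply: nonincreasing_cvg_mu W_noninc => //.
  - exact: le_lt_trans (probability_le1 _ (mW _)) (ltry 1).
  - by move=> m; exact: mW.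
  - by apply: bigcapT_measurable => m; exact: mW.
rewrite bigcap_switch_window // measure0.
move=> /fine_cvgP[_ /cvgr_dist_lt /(_ eta eta_gt0) [N _ PW_small]].
exists (1 + N.+1%:R^-1); first by rewrite ltrDl.
move=> s s_le; apply: le_trans
  (le_measure P (mem_set (mW s)) (mem_set (mW _)) (switch_window_mono T_pos s_le)) _.
rewrite -(fineK (fin_num_measure P _ (mW _))) lee_fin.
have := PW_small N (leqnn N); rewrite /= sub0r normrN => /ltW; apply: le_trans.
exact: ler_norm.
Qed.

Lemma exists_stretch_row0_nonatom_between a b : a < b ->
  exists2 s, a < s < b & no_atom_at_ratio P (stretch_row0 s T).
Proof.
move=> ab; have c_neq0 j : T ord0 j / T 1 j != 0 by rewrite gt_eqF // divr_gt0.
pose X j (z : n.-tuple R) := tnth z j / (T ord0 j / T 1 j).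
have [j|s abs s_nonatom] := exists_nonatom_between P (X := X) _ ab.
  apply: measurable_realfun.measurable_funM; first exact: measurable_tnth.
  exact: measurable_cst.
exists s => // j; rewrite stretch_row0_ratio -(s_nonatom j); congr (P _).
by apply/seteqP; split => z; rewrite /X /= => zj; [rewrite zj mulfK | rewrite -zj divfK].
Qed.

End positive_matrix.

Lemma exists_nonatom_stretch_row0_ratio_ge T e : pos_matrix T -> (0 < n)%N -> 0 < e ->
  exists s, [/\ pos_matrix (stretch_row0 s T), no_atom_at_ratio P (stretch_row0 s T)
    & (sched_ratio P T - e%:E <= sched_ratio P (stretch_row0 s T))%E].
Proof.
move=> T_pos n_gt0 e_gt0; set M := total_time T; set o := opt_makespan T.
have o_gt0 : 0 < o := opt_makespan_gt0 n_gt0 T_pos.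
have M_ge0 : 0 <= M := total_time_ge0 T_pos.
(* Both s - 1 and the probability of the window are kept below eta, so that
   the two resulting errors add up to at most e o. *)
pose eta := e * o / (2 * (M + 1)).
have eta_eq : eta * (2 * (M + 1)) = e * o.
  by rewrite divfK // gt_eqF // mulr_gt0 // ltr_wpDl.
have eta_gt0 : 0 < eta by rewrite divr_gt0 ?mulr_gt0 // ltr_wpDl.
have [s0 s0_gt1 window_small] := measure_switch_window_small T_pos eta_gt0.
have [|s /andP[s_gt1 s_lt] s_nonatom] :=
  exists_stretch_row0_nonatom_between T_pos (a := 1) (b := Num.min s0 (1 + eta)).
  by rewrite lt_min s0_gt1 ltrDl.
have s_ge1 := ltW s_gt1; have Ts_pos := stretch_row0_pos s_ge1 T_pos.
exists s; split => //.
have W_fin := fin_num_measure P _ (measurable_switch_window s T).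
have PW_le : fine (P (switch_window s T)) <= eta.
  by rewrite -lee_fin fineK // window_small // (le_trans (ltW s_lt)) // ge_min lexx.
have s_le : s - 1 <= eta.
  by rewrite lerBlDl (le_trans (ltW s_lt)) // ge_min lexx orbT.
rewrite !sched_ratioE // -EFinB lee_fin.
apply: (perturbed_ratio_ge (s := s) (p := fine (P (switch_window s T))) (M := M)).
- exact: o_gt0.
- exact: opt_makespan_gt0.
- rewrite fine_ge0 ?exp_makespan_ge0 // -lee_fin fineK ?exp_makespan_fin_num //.
  exact: exp_makespan_le_total.
- by rewrite fine_ge0 ?exp_makespan_ge0.
- exact: s_ge1.
- exact: opt_makespan_stretch_row0_le.
- rewrite -lee_fin EFinD EFinM !fineK ?exp_makespan_fin_num //.
  exact: exp_makespan_le_stretch_row0.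
- by rewrite -eta_eq; nra.
- exact: ltW.
Qed.

End expected_makespan.

Theorem theorem2 (R : realType) (n : nat) (hn : (0 < n)%N)
  (P : probability (n.-tuple R) R) (hP : supported_pos P) :
  ratio_sup P =
  ereal_sup [set sched_ratio P T |
               T in [set T | pos_matrix T /\ no_atom_at_ratio P T]].
Proof.
apply/eqP; rewrite eq_le; apply/andP; split; last first.
  by apply: ereal_sup_le => _ [T [T_pos _] <-]; exists T.
apply/ereal_supP => _ [T T_pos <-]; apply/lee_subgt0Pr => e e_gt0.
have [s [Ts_pos Ts_nonatom ratio_ge]] :=
  exists_nonatom_stretch_row0_ratio_ge P T_pos hn e_gt0.
by apply: le_trans ratio_ge (ereal_sup_ubound _); exists (stretch_row0 s T).
Qed.
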